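(* Consider the online tolling setting described in the context, with O-D pairs and values of time drawn i.i.d. across periods $t\in[T]$ from a distribution $\mathcal{D}$ whose support has nonnegative values of time. Let $\bm{\pi}$ be the toll-update algorithm with step size $\gamma=1/\sqrt{T}$: $\boldsymbol{\tau}^{(1)}=\bm{0}$, in each period $t$ the users play an equilibrium under $\boldsymbol{\tau}^{(t)}$ with resulting edge flows $\bm{x}^t$, and $\boldsymbol{\tau}^{(t+1)}=(\boldsymbol{\tau}^{(t)}-\gamma(\bm{c}-\bm{x}^t))_+$ componentwise. Then its expected regret and expected constraint violation satisfy $$R_T(\bm{\pi})\le\frac{|E|\,(|\mathcal{U}|+\max_{e\in E}c_e)^2}{2}\sqrt{T},\qquad V_T(\bm{\pi})\le |E|\,\big(\max_{u\in\mathcal{U}}\lambda_u+\max_{e\in E}c_e+|\mathcal{U}|\big)\sqrt{T}.$$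
   Context: Network: directed graph $G=(V,E)$, edge capacities $\bm{c}=\{c_e\}_{e\in E}$ with $c_e\ge0$, fixed edge travel times $l_e\ge 0$; for a path $P$, $l_P=\sum_{e\in P}l_e$. A finite set $\mathcal{U}$ of users; user $u$ has a fixed outside-option cost $\lambda_u\ge 0$. In each period $t=1,\dots,T$ the vector $(\bm{w}^t,\bm{v}^t)=((w^t_u)_{u\in\mathcal{U}},(v^t_u)_{u\in\mathcal{U}})$ of O-D pairs and values of time is drawn i.i.d. from $\mathcal{D}$; $\mathcal{P}^t_u$ is the finite set of paths connecting $w^t_u$. Given nonnegative tolls $\boldsymbol{\tau}=\{\tau_e\}$, user $u$'s cost of path $P$ in period $t$ is $v^t_ul_P+\sum_{e\in P}\tau_e$, and an equilibrium is an assignment of each user to exactly one of a path in $\mathcal{P}^t_u$ or the outside option (binary $f^t_{P,u}$, $f^t_{o,u}$ summing to 1) that minimizes this cost among paths and the outside option (ties broken arbitrarily); edge flows are $x^t_e=\sum_{u}\sum_{P\in\mathcal{P}^t_u:e\in P}f^t_{P,u}$ (capacities need not be respected). A tolling policy chooses $\boldsymbol{\tau}^{(t)}$ as a function only of $\bm{x}^1,\dots,\bm{x}^{t-1}$. The total system cost in period $t$ is $U_t=\sum_u\big(v^t_u\sum_{P\in\mathcal{P}^t_u}l_Pf^t_{P,u}+\lambda_uf^t_{o,u}\big)$, and $U^*_t$ is the optimal value of $\min\sum_u(v^t_u\sum_{P}l_Pf_{P,u}+\lambda_uf_{o,u})$ over binary assignments with $\sum_Pf_{P,u}+f_{o,u}=1$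 for each $u$ and $\sum_u\sum_{P\ni e}f_{P,u}\le c_e$ for each $e$ (the offline optimum with full knowledge of period-$t$ data). Regret: $R_T(\bm{\pi})=\mathbb{E}[\sum_{t=1}^T(U_t-U^*_t)]$. Constraint violation: $V_T(\bm{\pi})=\mathbb{E}\big[\|(\sum_{t=1}^T(\bm{x}^t-\bm{c}))_+\|_2\big]$, with $(\cdot)_+$ the componentwise positive part. Expectations are over $\mathcal{D}$. *)

From mathcomp Require Import all_boot all_order all_algebra.
From mathcomp Require Import all_classical all_reals all_analysis.
Set Implicit Arguments. Unset Strict Implicit. Unset Printing Implicit Defensive.
Import Order.TTheory GRing.Theory Num.Theory.
Local Open Scope classical_set_scope.
Local Open Scope ring_scope.

Section Network.
Variables (R : realType) (V E : finType) (src dst : E -> V).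

Fixpoint walk (o d : V) (p : seq E) : bool :=
  match p with
  | [::] => o == d
  | e :: p' => (src e == o) && walk (dst e) d p'
  end.

Definition is_path (w : V * V) (p : seq E) : bool :=
  walk w.1 w.2 p && uniq (w.1 :: map dst p).

Variable (l : E -> R).

Definition path_len (p : seq E) : R := \sum_(e <- p) l e.

Variable (U : finType).

(* a u = Some p : user u takes path p ;  a u = None : outside option *)
Definition assignment := U -> option (seq E).

Definition valid (w : U -> V * V) (a : assignment) : Prop :=
  forall u, if a u is Some p then is_path (w u) p else true.

Definition flow (a : assignment) (e : E) : R :=
  \sum_(u : U) (if a u is Some p then (e \in p)%:R else 0).

Definition user_cost (lam v : U -> R) (tau : E -> R) (u : U)
  (o : option (seq E)) : R :=
  if o is Some p then v u * path_len p + \sum_(e <- p) tau e else lam u.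

Definition is_equilibrium (lam : U -> R) (w : U -> V * V) (v : U -> R)
  (tau : E -> R) (a : assignment) : Prop :=
  valid w a /\
  forall u,
    (forall p, is_path (w u) p ->
       user_cost lam v tau u (a u) <= user_cost lam v tau u (Some p)) /\
    user_cost lam v tau u (a u) <= lam u.

Definition system_cost (lam v : U -> R) (a : assignment) : R :=
  \sum_(u : U) (if a u is Some p then v u * path_len p else lam u).

Definition feasible (c : E -> R) (w : U -> V * V) (a : assignment) : Prop :=
  valid w a /\ forall e, flow a e <= c e.

Definition opt_cost (c : E -> R) (lam : U -> R) (w : U -> V * V)
  (v : U -> R) : R :=
  inf [set system_cost lam v a | a in [set a | feasible c w a]].

End Network.
Arguments flow {R E U}.

(* toll dynamics: tolls 0 = tau^(1) = 0, tolls (t+1) = (tolls t - gamma (c - x t))_+ ;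
   x t is the edge flow of (0-based) period t *)
Fixpoint tolls (R : realType) (E : Type) (gamma : R) (c : E -> R)
  (x : nat -> E -> R) (t : nat) : E -> R :=
  match t with
  | 0 => fun _ => 0
  | t'.+1 => fun e => Num.max 0 (tolls gamma c x t' e - gamma * (c e - x t' e))
  end.

Section IID.
Variables (d : measure_display) (Omega : measurableType d) (R : realType).
Variables (V U : finType).
Variables (P : probability Omega R).
Variables (w : nat -> Omega -> U -> V * V) (v : nat -> Omega -> U -> R).

Definition data_rect (t : nat) (aw : U -> V * V) (B : U -> set R) : set Omega :=
  [set om | forall u, w t om u = aw u /\ B u (v t om u)].

(* (w^t, v^t), t < T, are measurable and i.i.d.: their joint law on
   measurable rectangles (a pi-system generating the product sigma-algebra
   of (V*V)^U x R^U) factorizes, with each factor the law of period 0. *)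
Definition iid_data (T : nat) : Prop :=
  (forall t, (t < T)%N -> forall u,
      (forall a, measurable [set om | w t om u = a]) /\
      measurable_fun setT (fun om => v t om u)) /\
  forall (S : seq nat), uniq S -> all (fun t => t < T)%N S ->
  forall (aw : nat -> U -> V * V) (B : nat -> U -> set R),
    (forall t u, measurable (B t u)) ->
    P (\big[setI/setT]_(t <- S) data_rect t (aw t) (B t)) =
    (\prod_(t <- S) P (data_rect 0 (aw t) (B t)))%E.

End IID.

(* Users in equilibrium minimise their total cost, which is the system cost
   plus the toll revenue; comparing with an optimal capacity-feasible
   assignment, whose toll payment is at most sum_e tau_e c_e, bounds the regret
   of period t by sum_e tau_e (c_e - x_e^t).  The tolls are projected gradient
   steps for this linear loss, so the potential tau_e^2 bounds its sum over
   t < T by gamma/2 sum_t (c_e - x_e^t)^2 <= gamma T (|U| + c_max)^2 / 2.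
   For the violation, tau_e^(T+1) >= gamma sum_t (x_e^t - c_e), while tau_e
   never exceeds lambda_max + gamma |U|, since no user takes an edge whose toll
   alone exceeds every outside-option cost.  Both bounds hold for every
   realisation of the data, so they pass to expectations without using
   independence. *)

From mathcomp Require Import all_boot all_order all_algebra.
From mathcomp Require Import all_classical all_reals all_analysis.
From mathcomp Require Import measurable_realfun ring lra.
Set Implicit Arguments. Unset Strict Implicit. Unset Printing Implicit Defensive.
Import Order.TTheory GRing.Theory Num.Theory.
Local Open Scope classical_set_scope.
Local Open Scope ring_scope.

Lemma sumr_uniq_indicator (R : pzSemiRingType) (T : finType) (F : T -> R) (s : seq T) :
  uniq s -> \sum_(x <- s) F x = \sum_x F x * (x \in s)%:R.
Proof.
move=> us; rewrite big_uniq //= big_mkcond; apply: eq_bigr => x _.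
by case: (x \in s); rewrite ?mulr1 ?mulr0.
Qed.

Lemma projected_descent_sum_le (R : realFieldType) (g : R) (gr tau : nat -> R) :
  0 <= g -> tau 0%N = 0 -> (forall t, tau t.+1 = Num.max 0 (tau t - g * gr t)) ->
  forall t, \sum_(s < t) tau s * gr s <= g / 2 * \sum_(s < t) gr s ^+ 2.
Proof.
move=> g_ge0 tau0 tauS.
have potential t : 2 * g * \sum_(s < t) tau s * gr s + tau t ^+ 2
                   <= g ^+ 2 * \sum_(s < t) gr s ^+ 2.
  elim: t => [|t IH]; first by rewrite !big_ord0 tau0 expr2 !mulr0 addr0.
  have proj : tau t.+1 ^+ 2 <= (tau t - g * gr t) ^+ 2.
    rewrite tauS; case: (lerP 0 (tau t - g * gr t)) => [_|_]; first exact: lexx.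
    by rewrite expr2 mulr0 sqr_ge0.
  rewrite !big_ord_recr /=; nra.
move=> t; move: g_ge0; rewrite le_eqVlt => /predU1P [g_eq0 | g_gt0].
  rewrite -g_eq0 !mul0r big1 // => s _.
  have := potential s; rewrite -g_eq0 => pot.
  suff -> : tau s = 0 by rewrite mul0r.
  nra.
rewrite mulrAC ler_pdivlMr ?ltr0n //; have := sqr_ge0 (tau t); have := potential t; nra.
Qed.

Lemma divr_sqrt_natr (R : rcfType) n : 1 / Num.sqrt n%:R * n%:R = Num.sqrt n%:R :> R.
Proof.
rewrite -{2}[n%:R]sqr_sqrtr ?ler0n // expr2 mul1r mulrA.
by have [->|s_neq0] := eqVneq (Num.sqrt n%:R : R) 0; rewrite ?mulr0 ?mulVf ?mul1r.
Qed.

Lemma sqrt_sum_sqr_le_card (R : rcfType) (I : finType) (m : I -> R) (A : R) :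
  0 <= A -> (forall i, 0 <= m i <= A) -> Num.sqrt (\sum_i m i ^+ 2) <= #|I|%:R * A.
Proof.
move=> A_ge0 m_bnd.
rewrite -[X in _ <= X]ger0_norm ?mulr_ge0 // -sqrtr_sqr ler_wsqrtr //.
apply: (@le_trans _ _ (\sum_(i : I) A ^+ 2)).
  by apply: ler_sum => i _; have /andP [m0 mA] := m_bnd i; nra.
have -> : \sum_(i : I) A ^+ 2 = #|I|%:R * A ^+ 2 by rewrite sumr_const mulr_natl.
rewrite exprMn; apply: ler_wpM2r; first exact: sqr_ge0.
rewrite -natrX ler_nat.
by case: #|I| => // k; rewrite expnS leq_pmulr // expn_gt0.
Qed.

Section Equilibrium.
Variables (R : realType) (V E U : finType) (src dst : E -> V).
Variables (l c : E -> R) (lam : U -> R).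

Lemma is_path_uniq w p : is_path src dst w p -> uniq p.
Proof. by case/andP => _ /= /andP [_ /map_uniq]. Qed.

Lemma flow_ge0 (a : assignment E U) e : 0 <= flow (R := R) a e.
Proof. by apply: sumr_ge0 => u _; case: (a u). Qed.

Lemma flow_le_card (a : assignment E U) e : flow (R := R) a e <= #|U|%:R.
Proof.
rewrite -sum1_card natr_sum; apply: ler_sum => u _.
by case: (a u) => [p|] //; case: (e \in p).
Qed.

Lemma sum_user_cost (v : U -> R) (tau : E -> R) w (a : assignment E U) :
  valid src dst w a ->
  \sum_u user_cost l lam v tau u (a u) = system_cost l lam v a + \sum_e tau e * flow a e.
Proof.
move=> va; rewrite /system_cost /flow.
under [X in _ = _ + X]eq_bigr do rewrite mulr_sumr.
rewrite [X in _ = _ + X]exchange_big -big_split /=; apply: eq_bigr => u _.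
have := va u; rewrite /user_cost; case: (a u) => [p|] hp.
  by rewrite (sumr_uniq_indicator _ (is_path_uniq hp)).
by rewrite big1 ?addr0 // => e _; rewrite mulr0.
Qed.

Lemma equilibrium_regret_le (w : U -> V * V) (v : U -> R) (tau : E -> R)
    (a : assignment E U) :
  (forall e, 0 <= c e) -> (forall e, 0 <= tau e) ->
  is_equilibrium src dst l lam w v tau a ->
  system_cost l lam v a - opt_cost src dst l c lam w v <= \sum_e tau e * (c e - flow a e).
Proof.
move=> c0 tau0 [va eq_a].
pose outside : assignment E U := fun _ => None.
have outside_feasible : feasible src dst c w outside.
  by split=> // e; rewrite /flow big1.
suff : system_cost l lam v a + \sum_e tau e * flow a e - \sum_e tau e * c e
       <= opt_cost src dst l c lam w v.
  by under [X in _ -> _ <= X]eq_bigr do rewrite mulrBr; rewrite sumrB; lra.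
apply: lb_le_inf; first by exists (system_cost l lam v outside), outside.
move=> _ [b [vb flow_b] <-].
have users : \sum_u user_cost l lam v tau u (a u) <= \sum_u user_cost l lam v tau u (b u).
  apply: ler_sum => u _; have [to_paths to_outside] := eq_a u.
  by have := vb u; case: (b u) => [p|] hp; [exact: to_paths | exact: to_outside].
have tolls_b : \sum_e tau e * flow b e <= \sum_e tau e * c e.
  by apply: ler_sum => e _; exact: ler_wpM2l.
rewrite (sum_user_cost _ _ va) (sum_user_cost _ _ vb) in users; lra.
Qed.

Lemma equilibrium_flow_eq0 (w : U -> V * V) (v : U -> R) (tau : E -> R)
    (a : assignment E U) lmax e :
  (forall e, 0 <= l e) -> (forall u, 0 <= v u) -> (forall e, 0 <= tau e) ->
  (forall u, lam u <= lmax) -> lmax < tau e ->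
  is_equilibrium src dst l lam w v tau a -> flow (R := R) a e = 0.
Proof.
move=> l0 v0 tau0 lam_le tau_e [_ eq_a]; rewrite /flow big1 // => u _.
have [_ /= le_outside] := eq_a u.
case au: (a u) le_outside => [p|] //=; case ep: (e \in p) => //= cost_le.
have toll_e : tau e <= \sum_(e' <- p) tau e'.
  by rewrite (big_rem e ep) /= lerDl sumr_ge0.
have travel : 0 <= v u * path_len l p by rewrite mulr_ge0 ?sumr_ge0.
have := lam_le u; lra.
Qed.

End Equilibrium.

Section Tolls.
Variables (R : realType) (E : finType) (g : R) (c : E -> R) (x : nat -> E -> R).

Lemma tolls_ge0 t e : 0 <= tolls g c x t e.
Proof. by case: t => [|t] //=; rewrite le_max lexx. Qed.

Lemma tolls_ge_sum t e : g * \sum_(s < t) (x s e - c e) <= tolls g c x t e.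
Proof.
elim: t => [|t IH]; first by rewrite big_ord0 mulr0.
rewrite big_ord_recr /= mulrDr.
have : tolls g c x t e - g * (c e - x t e) <= Num.max 0 (tolls g c x t e - g * (c e - x t e)).
  by rewrite le_max lexx orbT.
lra.
Qed.

Lemma tolls_slack_sum_le T (M : R) : 0 <= g ->
    (forall t e, (t < T)%N -> (c e - x t e) ^+ 2 <= M ^+ 2) ->
  \sum_(t < T) \sum_e tolls g c x t e * (c e - x t e) <= #|E|%:R * M ^+ 2 / 2 * (g * T%:R).
Proof.
move=> g0 bounded; rewrite exchange_big /=.
have -> : #|E|%:R * M ^+ 2 / 2 * (g * T%:R) = \sum_(e : E) g / 2 * (T%:R * M ^+ 2).
  by rewrite sumr_const -mulr_natl; ring.
apply: ler_sum => e _.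
have := @projected_descent_sum_le _ g (fun s => c e - x s e) (fun s => tolls g c x s e)
  g0 erefl (fun t => erefl) T.
move/le_trans; apply; rewrite ler_wpM2l ?divr_ge0 //.
apply: (@le_trans _ _ (\sum_(t < T) M ^+ 2)).
  by apply: ler_sum => t _; exact: bounded.
by rewrite sumr_const card_ord mulr_natl.
Qed.

End Tolls.

Section TollDynamics.
Variables (R : realType) (V E U : finType) (src dst : E -> V).
Variables (l c : E -> R) (lam : U -> R) (g : R) (T : nat).
Variables (a : nat -> assignment E U) (w : nat -> U -> V * V) (v : nat -> U -> R).
Hypotheses (c_ge0 : forall e, 0 <= c e) (g_ge0 : 0 <= g).
Local Notation x := (fun s => flow (R := R) (a s)).
Hypothesis equilibrium_a : forall t, (t < T)%N ->
  is_equilibrium src dst l lam (w t) (v t) (tolls g c x t) (a t).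

Lemma regret_le (cmax : R) : (forall e, c e <= cmax) ->
  \sum_(t < T) (system_cost l lam (v t) (a t) - opt_cost src dst l c lam (w t) (v t))
    <= #|E|%:R * (#|U|%:R + cmax) ^+ 2 / 2 * (g * T%:R).
Proof.
move=> c_le; apply: le_trans (tolls_slack_sum_le (x := x) g_ge0 _) => [|t e _].
  apply: ler_sum => t _; apply: equilibrium_regret_le => //.
    exact: tolls_ge0.
  exact: equilibrium_a.
have := flow_ge0 R (a t) e; have := flow_le_card R (a t) e.
have := c_ge0 e; have := c_le e; nra.
Qed.

Variable lmax : R.
Hypotheses (l_ge0 : forall e, 0 <= l e) (lmax_ge0 : 0 <= lmax).
Hypotheses (lam_le : forall u, lam u <= lmax) (v_ge0 : forall t u, (t < T)%N -> 0 <= v t u).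

Lemma tolls_le t e : (t <= T)%N -> tolls g c x t e <= lmax + g * #|U|%:R.
Proof.
elim: t e => [|t IH] e tT /=; first by rewrite addr_ge0 ?mulr_ge0.
rewrite ge_max addr_ge0 ?mulr_ge0 //=.
have gc_ge0 := mulr_ge0 g_ge0 (c_ge0 e).
have [tau_le | tau_gt] := lerP (tolls g c x t e) lmax.
  have := ler_wpM2l g_ge0 (flow_le_card R (a t) e); nra.
rewrite (equilibrium_flow_eq0 l_ge0 (fun u => @v_ge0 t u tT) (tolls_ge0 g c _ t) lam_le
  tau_gt (equilibrium_a tT)).
have := IH e (ltnW tT); lra.
Qed.

Lemma excess_flow_le e : g = 1 / Num.sqrt T%:R ->
  \sum_(t < T) (flow (a t) e - c e) <= (lmax + #|U|%:R) * Num.sqrt T%:R.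
Proof.
move=> g_def; have [T0 | T_gt0] := posnP T.
  by rewrite T0 big_ord0 sqrtr0 mulr0.
set s : R := Num.sqrt T%:R.
have s_ge1 : 1 <= s by rewrite -sqrtr1; apply: ler_wsqrtr; rewrite ler1n.
have gs : g * s = 1 by rewrite g_def mul1r mulVf // gt_eqF // (lt_le_trans ltr01).
have := le_trans (tolls_ge_sum g c x T e) (tolls_le e (leqnn T)); rewrite /= => gS.
have := ler_wpM2l (le_trans ler01 s_ge1) gS.
rewrite mulrDr !mulrA (mulrC s g) gs !mul1r => S_le.
have := ler0n R #|U|; nra.
Qed.

End TollDynamics.

Section IntegralBound.
Context d (T : measurableType d) (R : realType) (mu : {measure set T -> \bar R}).
Local Open Scope ereal_scope.
Import HBNNSimple.

(* [f] need not be measurable (the regret involves the infimum [opt_cost]),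
   so the bound is checked on each simple function below [f]. *)
Lemma ge0_integral_ae_le_cst (f : T -> \bar R) (B : R) : (0 <= B)%R ->
  (forall x, 0 <= f x) -> {ae mu, forall x, f x <= B%:E} ->
  \int[mu]_x f x <= B%:E * mu setT.
Proof.
move=> B_ge0 f_ge0 f_le; rewrite ge0_integralTE //.
apply: ge_ereal_sup => _ [h /= h_le <-].
have -> : sintegral mu h = \int[mu]_x (h x)%:E by rewrite integral_nnsfun // patch_setT.
rewrite -integral_cst //; apply: ae_ge0_le_integral => //.
- by move=> x _; rewrite lee_fin.
- by apply/measurable_EFinP; exact: measurable_funP.
- by apply: filterS f_le => x f_le_x _; exact: le_trans (h_le x) f_le_x.
Qed.

Lemma integral_ae_le_cst (f : T -> R) (B : R) : (0 <= B)%R ->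
  {ae mu, forall x, (f x <= B)%R} -> \int[mu]_x (f x)%:E <= B%:E * mu setT.
Proof.
move=> B_ge0 f_le; rewrite integralE -[_ * _]sube0; apply: leeB.
  apply: (ge0_integral_ae_le_cst B_ge0 (funepos_ge0 _)).
  by apply: filterS f_le => x f_le_x; rewrite funeposE ge_max !lee_fin f_le_x B_ge0.
by apply: integral_ge0 => x _; exact: funeneg_ge0.
Qed.

End IntegralBound.

Theorem theorem2
  (R : realType) (d : measure_display) (Omega : measurableType d)
  (P : probability Omega R)
  (V E U : finType) (src dst : E -> V)
  (c l : E -> R) (lam : U -> R)
  (hc : forall e, 0 <= c e) (hl : forall e, 0 <= l e) (hlam : forall u, 0 <= lam u)
  (T : nat)
  (w : nat -> Omega -> U -> V * V) (v : nat -> Omega -> U -> R)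
  (hiid : iid_data P w v T)
  (hv : forall t, (t < T)%N -> forall u, {ae P, forall om, 0 <= v t om u})
  (a : nat -> Omega -> assignment E U)
  (heq : forall t, (t < T)%N -> forall om,
     is_equilibrium src dst l lam (w t om) (v t om)
       (tolls (1 / Num.sqrt T%:R) c (fun s => flow (a s om)) t) (a t om)) :
  let cmax := \big[Num.max/0]_(e : E) c e in
  let lmax := \big[Num.max/0]_(u : U) lam u in
  (\int[P]_om (\sum_(t < T)
        (system_cost l lam (v t om) (a t om)
         - opt_cost src dst l c lam (w t om) (v t om)))%:E
     <= (#|E|%:R * (#|U|%:R + cmax) ^+ 2 / 2 * Num.sqrt T%:R)%:E)%E /\
  (\int[P]_om (Num.sqrt (\sum_(e : E)
        (Num.max 0 (\sum_(t < T) (flow (a t om) e - c e))) ^+ 2))%:E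
     <= (#|E|%:R * (lmax + cmax + #|U|%:R) * Num.sqrt T%:R)%:E)%E.
Proof.
move=> cmax lmax.
have c_le e : c e <= cmax by exact: le_bigmax.
have lam_le u : lam u <= lmax by exact: le_bigmax.
have cmax_ge0 : 0 <= cmax by exact: bigmax_ge_id.
have lmax_ge0 : 0 <= lmax by exact: bigmax_ge_id.
set g := 1 / Num.sqrt T%:R in heq.
have g_ge0 : 0 <= g by rewrite divr_ge0 ?sqrtr_ge0.
have expectation_le (f : Omega -> R) B : 0 <= B -> {ae P, forall om, f om <= B} ->
    (\int[P]_om (f om)%:E <= B%:E)%E.
  by move=> B_ge0 f_le; rewrite -[B%:E]mule1 -(probability_setT P) integral_ae_le_cst.
split.
  apply: expectation_le; first by rewrite !mulr_ge0 ?sqrtr_ge0 ?invr_ge0 // addr_ge0.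
  apply: aeW => om; rewrite -divr_sqrt_natr -/g.
  exact: regret_le hc g_ge0 (fun t tT => heq t tT om) _ c_le.
have v_ge0 : {ae P, forall om (i : 'I_T * U), 0 <= v i.1 om i.2}.
  by apply: filter_forall => i; exact: hv (ltn_ord i.1) i.2.
set A := (lmax + cmax + #|U|%:R) * Num.sqrt T%:R.
have A_ge0 : 0 <= A by rewrite mulr_ge0 ?sqrtr_ge0 // !addr_ge0.
apply: expectation_le; first by rewrite -mulrA mulr_ge0.
apply: filterS v_ge0 => om v_ge0_om; rewrite -mulrA; apply: sqrt_sum_sqr_le_card => // e.
rewrite le_max lexx ge_max A_ge0 /=.
apply: le_trans (excess_flow_le hc g_ge0 (fun t tT => heq t tT om) hl lmax_ge0 lam_le
  (fun t u tT => v_ge0_om (Ordinal tT, u)) e erefl) _.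
by apply: ler_wpM2r; rewrite ?sqrtr_ge0 // lerD2r lerDl.
Qed.
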